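(* For every $k\ge1$, the derived subgroup $B_k'$ is contained in $G_k$, i.e. $B_k'\le G_k$.
   Context: Let $C_2=\{e,\sigma\}$ with $\sigma=(1,2)$. Define $B_1=C_2$ and $B_k=B_{k-1}\wr C_2$ for $k>1$, with elements written as wreath recursions $(g_1,g_2)\pi$, $g_1,g_2\in B_{k-1}$, $\pi\in C_2$, and multiplication $(g_1,g_2)\pi\cdot(h_1,h_2)\rho=(g_1h_{\pi(1)},g_2h_{\pi(2)})\pi\rho$ (so $B_k$ is the group of automorphisms of the binary rooted tree with $k$ levels, $B_k\cong\mathrm{Syl}_2 S_{2^k}$). Define $G_1=\{e\}$ and, for $k>1$, $G_k=\{(g_1,g_2)\pi\in B_k : g_1g_2\in G_{k-1}\}$. *)

(* the iterated wreath products B_k, encoded literally as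
   wreath recursions (g1, g2, pi), with pi = true standing for sigma = (1 2). *)

(* Bt k = B_k for k >= 1; Bt 0 = trivial group, so Bt 1 = B_0 wr C_2 = C_2. *)
Fixpoint Bt (k : nat) : Type :=
  match k with
  | 0 => unit
  | S k' => (Bt k' * Bt k' * bool)%type
  end.

Fixpoint one (k : nat) : Bt k :=
  match k return Bt k with
  | 0 => tt
  | S k' => (one k', one k', false)
  end.

Fixpoint mul (k : nat) : Bt k -> Bt k -> Bt k :=
  match k return Bt k -> Bt k -> Bt k with
  | 0 => fun _ _ => tt
  | S k' => fun x y =>
      let '(g1, g2, p) := x in
      let '(h1, h2, r) := y in
      if p then (mul k' g1 h2, mul k' g2 h1, xorb p r)
      else (mul k' g1 h1, mul k' g2 h2, xorb p r)
  end.

Fixpoint inv (k : nat) : Bt k -> Bt k :=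
  match k return Bt k -> Bt k with
  | 0 => fun _ => tt
  | S k' => fun x =>
      let '(g1, g2, p) := x in
      if p then (inv k' g2, inv k' g1, p) else (inv k' g1, inv k' g2, p)
  end.

Definition comm (k : nat) (a b : Bt k) : Bt k :=
  mul k (mul k (inv k a) (inv k b)) (mul k a b).

Inductive derived (k : nat) : Bt k -> Prop :=
  | derived_comm : forall a b, derived k (comm k a b)
  | derived_one : derived k (one k)
  | derived_mul : forall x y, derived k x -> derived k y -> derived k (mul k x y)
  | derived_inv : forall x, derived k x -> derived k (inv k x).

(* G_1 = {e};  G_k = {(g1,g2)pi : g1 g2 in G_{k-1}} for k > 1.
   (Gp 0 is irrelevant.) *)
Fixpoint Gp (k : nat) : Bt k -> Prop :=
  match k return Bt k -> Prop with
  | 0 => fun _ => True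
  | S k' => fun x =>
      match k' with
      | 0 => x = one (S k')
      | _ => Gp k' (mul k' (fst (fst x)) (snd (fst x)))
      end
  end.

From Stdlib Require Import Bool Lia.

(* G_k is the kernel of the homomorphism B_k -> Z/2 counting, modulo 2, the
   swaps performed at the vertices of the lowest level (for k >= 2 the root
   swap is ignored and the counts of the two subtrees are added, which is also
   the count of g1 g2).  A homomorphism into an abelian group kills every
   commutator, hence the whole derived subgroup. *)

Fixpoint bottom_parity (k : nat) : Bt k -> bool :=
  match k return Bt k -> bool with
  | 0 => fun _ => false
  | S k' => fun x =>
      match k' with
      | 0 => snd x
      | _ => xorb (bottom_parity k' (fst (fst x))) (bottom_parity k' (snd (fst x)))
      end
  end.

Lemma bottom_parity_SS (k : nat) (g1 g2 : Bt (S k)) (p : bool) :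
  bottom_parity (S (S k)) (g1, g2, p)
  = xorb (bottom_parity (S k) g1) (bottom_parity (S k) g2).
Proof. reflexivity. Qed.

Lemma mul_S (k : nat) (g1 g2 h1 h2 : Bt k) (p r : bool) :
  mul (S k) (g1, g2, p) (h1, h2, r)
  = if p then (mul k g1 h2, mul k g2 h1, xorb p r)
    else (mul k g1 h1, mul k g2 h2, xorb p r).
Proof. reflexivity. Qed.

Lemma inv_S (k : nat) (g1 g2 : Bt k) (p : bool) :
  inv (S k) (g1, g2, p)
  = if p then (inv k g2, inv k g1, p) else (inv k g1, inv k g2, p).
Proof. reflexivity. Qed.

Lemma bottom_parity_mul (k : nat) (x y : Bt k) :
  bottom_parity k (mul k x y) = xorb (bottom_parity k x) (bottom_parity k y).
Proof.
  revert x y; induction k as [|k IH]; [reflexivity|].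
  intros [[g1 g2] p] [[h1 h2] r].
  destruct k as [|k]; [destruct p; reflexivity|].
  rewrite mul_S; destruct p; rewrite !bottom_parity_SS, !IH;
    destruct (bottom_parity (S k) g1), (bottom_parity (S k) g2),
             (bottom_parity (S k) h1), (bottom_parity (S k) h2); reflexivity.
Qed.

Lemma bottom_parity_inv (k : nat) (x : Bt k) :
  bottom_parity k (inv k x) = bottom_parity k x.
Proof.
  revert x; induction k as [|k IH]; [reflexivity|].
  intros [[g1 g2] p].
  destruct k as [|k]; [destruct p; reflexivity|].
  rewrite inv_S; destruct p; rewrite !bottom_parity_SS, !IH; [apply xorb_comm | reflexivity].
Qed.

Lemma bottom_parity_one (k : nat) : bottom_parity k (one k) = false.
Proof.
  induction k as [|k IH]; [reflexivity|].
  destruct k as [|k]; [reflexivity|].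
  change (one (S (S k))) with (one (S k), one (S k), false).
  rewrite bottom_parity_SS, IH; reflexivity.
Qed.

Section DerivedInKernel.

Variables (k : nat) (f : Bt k -> bool).
Hypothesis f_mul : forall x y, f (mul k x y) = xorb (f x) (f y).
Hypothesis f_inv : forall x, f (inv k x) = f x.
Hypothesis f_one : f (one k) = false.

Lemma derived_in_kernel (x : Bt k) : derived k x -> f x = false.
Proof.
  induction 1 as [a b| |x y _ IHx _ IHy|x _ IHx].
  - unfold comm; rewrite !f_mul, !f_inv.
    destruct (f a), (f b); reflexivity.
  - exact f_one.
  - rewrite f_mul, IHx, IHy; reflexivity.
  - rewrite f_inv; exact IHx.
Qed.

End DerivedInKernel.

Lemma Gp_of_bottom_parity (k : nat) (x : Bt k) :
  1 <= k -> bottom_parity k x = false -> Gp k x.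
Proof.
  revert x; induction k as [|k IH]; intros x Hk Hx; [lia|].
  destruct x as [[g1 g2] p].
  destruct k as [|k].
  - destruct g1, g2; simpl in Hx; subst p; reflexivity.
  - change (Gp (S k) (mul (S k) g1 g2)).
    apply IH; [lia|].
    rewrite bottom_parity_mul; exact Hx.
Qed.

Theorem mainTheorem9 : forall (k : nat), 1 <= k ->
  forall x : Bt k, derived k x -> Gp k x.
Proof.
  intros k Hk x Hx.
  apply Gp_of_bottom_parity; [exact Hk|].
  apply (derived_in_kernel k (bottom_parity k)); [| | | exact Hx].
  - exact (bottom_parity_mul k).
  - exact (bottom_parity_inv k).
  - exact (bottom_parity_one k).
Qed.
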